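(* (1) If $A$ is a finite abelian group, then $A$ has, up to isomorphism, a unique GI-extension, namely $A\rtimes C_2$ where the generator of $C_2$ acts by $a\mapsto -a$. (2) For a finite group $G$, the direct product $G\times C_2$ (with $G=G\times\{1\}$) is a GI-extension of $G$ if and only if $G$ is generated by elements of order $2$. (3) For $n\ge 2$, the symmetric group $S_n$ is a GI-extension of the alternating group $A_n$.
   Context: Given a group $G'$ with a normal subgroup $G$ of index $2$, $G'$ is called a GI-extension of $G$ if $G'$ is generated by involutions (elements of order exactly $2$) that are not contained in $G$. *)

From mathcomp Require Import all_boot all_fingroup all_solvable.
Set Implicit Arguments. Unset Strict Implicit. Unset Printing Implicit Defensive.
Local Open Scope group_scope.

Definition GI_ext (gT : finGroupType) (G Gp : {group gT}) : Prop :=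
  [/\ G <| Gp, #|Gp : G| = 2%N &
      Gp :=: << [set x in Gp :\: G | #[x] == 2%N] >>].

From mathcomp Require Import all_boot all_fingroup all_solvable zmodp.
Set Implicit Arguments. Unset Strict Implicit. Unset Printing Implicit Defensive.
Local Open Scope group_scope.

(* If t is an involution inverting A, then (a t)^2 = a a^t = 1, so every a t
   is an involution outside A and a = (a t) t: thus A ><| <[t]> is a
   GI-extension, and these are all isomorphic once the bases are.
   Conversely, let K be a GI-extension of an abelian A and s an involution of
   K outside A. Every generating involution lies in the coset A s, and
   (a s)^2 = a a^s; hence the generators lie in N <[s]>, where N is the
   subgroup of elements of A inverted by s. So K = N <[s]>, which forces
   N = A and K = A ><| <[s]>. Existence comes from the external semidirect
   product of A by 'Z_2 acting through inversion.
   In G x C_2 the involutions outside G x 1 are the (g, c) with g^2 = 1, and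
   they generate <<g | g^2 = 1>> x C_2; in S_n the transpositions are odd
   involutions generating S_n. *)

Lemma order_eq2 (gT : finGroupType) (x : gT) :
  (#[x] == 2) = (x ^+ 2 == 1) && (x != 1).
Proof.
rewrite -order_dvdn -order_eq1.
by case: #[x] (order_gt0 x) => [|[|[|n]]].
Qed.

Lemma expg2_mul (gT : finGroupType) (a t : gT) :
  (a * t) ^+ 2 = a * a ^ t^-1 * t ^+ 2.
Proof. by rewrite !expg2 conjgE invgK !mulgA mulgKV. Qed.

Lemma sdprod_index2 (gT : finGroupType) (A K : {group gT}) s :
  A <| K -> #|K : A| = 2 -> s \in K :\: A -> #[s] = 2 -> A ><| <[s]> = K.
Proof.
move=> /andP[sAK nAK] iKA /setDP[Ks nAs] os.
have tiAs : A :&: <[s]> = 1.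
  apply/trivgP/subsetP=> y /setIP[Ay].
  rewrite -[y \in _]/(y \in <[s]>) (cycle2g os) !inE.
  by case/orP=> // /eqP ys; rewrite -ys Ay in nAs.
rewrite sdprodE ?cycle_subG ?(subsetP nAK) //; apply/eqP.
rewrite eqEcard mul_subG ?cycle_subG // TI_cardMg // -orderE os /=.
by rewrite -(Lagrange sAK) iKA.
Qed.

Section InvertingInvolution.
Variables (gT : finGroupType) (A K : {group gT}) (t : gT).
Hypotheses (defK : A ><| <[t]> = K) (ot : #[t] = 2).
Hypothesis tJ : {in A, forall a, a ^ t = a^-1}.

Lemma GI_ext_sdprod_inv : GI_ext A K.
Proof.
have [nAK tK _ _ tiAt] := sdprod_context defK; rewrite cycle_subG in tK.
have tV := invg2id ot.
have t1 : t != 1 by rewrite -order_eq1 ot.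
have tA : t \notin A.
  by apply: contra t1 => At; apply/eqP/set1gP; rewrite -tiAt inE At cycle_id.
have involution_mul a : a \in A -> a * t \in [set x in K :\: A | #[x] == 2].
  move=> Aa; have atA : a * t \notin A by rewrite groupMl.
  rewrite !inE atA groupM ?(subsetP (normal_sub nAK) a) //=.
  rewrite order_eq2 expg2_mul tV tJ // mulgV mul1g -ot expg_order eqxx.
  by apply: contra tA => /eqP at1; rewrite -(mulKg a t) at1 mulg1 groupV.
split=> //.
  apply/eqP; rewrite -(eqn_pmul2l (cardG_gt0 A)) Lagrange ?normal_sub //.
  by rewrite -(sdprod_card defK) -orderE ot.
apply/eqP; rewrite eqEsubset gen_subG; apply/andP; split; last first.
  by apply/subsetP=> x /setIdP[/setDP[]].
rewrite -{1}(sdprodWY defK) join_subG cycle_subG.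
have tS := involution_mul 1 (group1 A); rewrite mul1g in tS.
rewrite (mem_gen tS) andbT; apply/subsetP=> a Aa.
by rewrite -(mulgK t a) tV groupM ?mem_gen ?involution_mul.
Qed.

Lemma conjXg_inv a i : a \in A -> a ^ (t ^+ i) = if odd i then a^-1 else a.
Proof.
move=> Aa; elim: i => [|i IHi]; first by rewrite conjg1.
rewrite expgSr conjgM IHi /=; case: (odd i) => /=; last exact: tJ.
by rewrite conjVg tJ ?invgK.
Qed.

End InvertingInvolution.

Lemma isog_sdprod_inv (gT rT : finGroupType) (A K : {group gT}) (t : gT)
    (B L : {group rT}) (u : rT) :
    A ><| <[t]> = K -> #[t] = 2 -> {in A, forall a, a ^ t = a^-1} ->
    B ><| <[u]> = L -> #[u] = 2 -> {in B, forall b, b ^ u = b^-1} ->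
  A \isog B -> K \isog L.
Proof.
move=> defK ot tJ defL ou uJ /isogP[f injf im_f].
have tu : #[u] %| #[t] by rewrite ot ou.
have actf : {in A & <[t]>, morph_act 'J 'J f (eltm tu)}.
  move=> a _ Aa /cycleP[i ->] /=.
  have fAa : f a \in B by rewrite -im_f mem_morphim.
  rewrite eltmE (conjXg_inv tJ) // (conjXg_inv uJ) //.
  by case: (odd i); rewrite ?morphV.
have [_ defBu _ tiBu] := sdprodP defL.
apply/isogP; exists (sdprodm defK actf); last by rewrite im_sdprodm im_f im_eltm.
by rewrite injm_sdprodm injf injm_eltm ot ou dvdnn im_f im_eltm tiBu /=.
Qed.

Section InversionExtension.
Variables (gT : finGroupType) (A : {group gT}).
Hypothesis abA : abelian A.

Lemma invg_morphM : {in A &, {morph (fun x => x^-1) : x y / x * y}}.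
Proof. by move=> x y Ax Ay; rewrite invMg; apply: (centsP abA); rewrite groupV. Qed.
Canonical invg_morphism := Morphism invg_morphM.

Lemma injm_invg : 'injm invg_morphism.
Proof. by apply/injmP=> x y _ _; apply: invg_inj. Qed.

Lemma im_invg : invg_morphism @* A = A.
Proof.
apply/eqP; rewrite eqEcard (card_injm injm_invg) // leqnn andbT.
by apply/subsetP=> _ /morphimP[y _ Ay ->]; rewrite groupV.
Qed.

Definition inv_aut := aut injm_invg im_invg.

Lemma inv_autE : {in A, forall a, inv_aut a = a^-1}.
Proof. exact: autE. Qed.

Lemma order_inv_aut : #[inv_aut] %| #[Zp1 : 'Z_2].
Proof.
have AutA := Aut_aut injm_invg im_invg.
rewrite order_Zp1 order_dvdn expgS expg1.
apply/eqP/(eq_Aut (groupM AutA AutA) (group1 _)).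
by move=> x Ax; rewrite permM perm1 !inv_autE ?groupV ?invgK.
Qed.

Definition inv_act := comp_groupAction [Aut A] (eltm order_inv_aut).

Local Notation z := (Zp1 : 'Z_2).

Lemma inv_act_dom : eltm order_inv_aut @*^-1 Aut A = <[z]>.
Proof.
apply/eqP; rewrite eqEsubset subsetIl /= cycle_subG.
by apply/morphpreP; rewrite /= eltm_id cycle_id Aut_aut.
Qed.

Lemma mem_inv_act_dom : z \in eltm order_inv_aut @*^-1 Aut A.
Proof. by rewrite inv_act_dom cycle_id. Qed.

Lemma inv_actE : {in A, forall a, inv_act a z = a^-1}.
Proof. by move=> a Aa; rewrite /= eltm_id /autact /= apermE inv_autE. Qed.

Local Notation t := (sdpair2 inv_act z).
Local Notation B := (sdpair1 inv_act @* A).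

Lemma sdprod_inv_sdpair : B ><| <[t]> = setT.
Proof.
by rewrite -morphim_cycle ?mem_inv_act_dom // -inv_act_dom; apply: sdprod_sdpair.
Qed.

Lemma order_inv_sdpair : #[t] = 2.
Proof. by rewrite (order_injm (injm_sdpair2 _)) ?mem_inv_act_dom ?order_Zp1. Qed.

Lemma inv_sdpairJ : {in B, forall b, b ^ t = b^-1}.
Proof.
move=> _ /morphimP[a _ Aa ->].
by rewrite -sdpair_act ?mem_inv_act_dom ?inv_actE ?morphV.
Qed.

Lemma inv_sdpair_isog : B \isog A.
Proof. by rewrite isog_sym sub_isog ?injm_sdpair1. Qed.

End InversionExtension.

Lemma GI_ext_abelian_exists (gT : finGroupType) (A : {group gT}) :
  abelian A ->
  exists (rT : finGroupType) (B K : {group rT}) (t : rT),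
    [/\ B \isog A, GI_ext B K, B ><| <[t]> = K, #[t] = 2
      & {in B, forall b, b ^ t = b^-1}].
Proof.
move=> abA; have defK := sdprod_inv_sdpair abA.
have ot := order_inv_sdpair abA; have tJ := @inv_sdpairJ _ _ abA.
exists (sdprod_by (inv_act abA)), (sdpair1 (inv_act abA) @* A)%G, [set: _]%G.
exists (sdpair2 (inv_act abA) Zp1); split=> //; first exact: inv_sdpair_isog.
exact: GI_ext_sdprod_inv defK ot tJ.
Qed.

Lemma group_set_inverted (gT : finGroupType) (A : {group gT}) s :
  abelian A -> group_set [set a in A | a ^ s == a^-1].
Proof.
move=> abA; apply/group_setP; split=> [|a b].
  by rewrite inE group1 conj1g invg1 eqxx.
rewrite !inE => /andP[Aa /eqP sa] /andP[Ab /eqP sb].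
by rewrite groupM //= conjMg sa sb invMg; apply/eqP/(centsP abA); rewrite groupV.
Qed.

Section AbelianGIext.
Variables (gT : finGroupType) (A K : {group gT}).
Hypotheses (abA : abelian A) (gAK : GI_ext A K).

Lemma GI_ext_involution_inverts s :
  s \in K :\: A -> #[s] = 2 -> {in A, forall a, a ^ s = a^-1}.
Proof.
have [nAK iKA defK] := gAK; move=> sKA os.
have sV := invg2id os; have ss : s ^+ 2 = 1 by rewrite -os expg_order.
pose N := Group (group_set_inverted s abA).
have nNs : <[s]> \subset 'N(N).
  rewrite cycle_subG inE; apply/subsetP=> _ /imsetP[a /setIdP[Aa /eqP sa] ->].
  by rewrite inE -conjgM -expg2 ss conjg1 sa invgK groupV Aa eqxx.
have sKNs : K \subset N * <[s]>.
  rewrite -norm_joinEr // defK gen_subG; apply/subsetP=> x /setIdP[xKA].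
  have /rcosetP[a Aa ->] : x \in A :* s by rewrite (rcoset_index2 (normal_sub nAK)).
  rewrite order_eq2 expg2_mul sV ss mulg1 => /andP[/eqP asa _].
  have Na : a \in N by rewrite inE Aa /= eq_sym eq_invg_mul asa.
  by rewrite groupM ?mem_gen // inE ?Na ?cycle_id ?orbT.
move=> a Aa; have Ka := subsetP (normal_sub nAK) a Aa.
have /mulsgP[n y /setIdP[An /eqP sn] sy def_a] := subsetP sKNs a Ka.
move: sy; rewrite -[y \in _]/(y \in <[s]>) (cycle2g os) !inE => /orP[/eqP y1 | /eqP ys].
  by rewrite def_a y1 mulg1.
by have /setDP[_ /negP[]] := sKA; rewrite -(mulKg n s) -ys -def_a groupM ?groupV.
Qed.

Lemma GI_ext_abelian_sdprod :
  exists t, [/\ A ><| <[t]> = K, #[t] = 2 & {in A, forall a, a ^ t = a^-1}].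
Proof.
have [nAK iKA defK] := gAK.
have [s /setIdP[sKA /eqP os]] : exists s, s \in [set x in K :\: A | #[x] == 2].
  apply/set0Pn; apply: contra_eqN iKA => /eqP S0.
  by have /eqP-> : #|K : A| == 1%N by rewrite indexg_eq1 defK S0 gen0 sub1G.
by exists s; split; [apply: sdprod_index2 | | apply: GI_ext_involution_inverts].
Qed.

End AbelianGIext.

Lemma GI_ext_abelian_isog (gT rT : finGroupType) (A : {group gT})
    (B K : {group rT}) (K' : {group gT}) :
  abelian A -> B \isog A -> GI_ext B K -> GI_ext A K' -> K \isog K'.
Proof.
move=> abA isoBA gBK gAK'; have abB : abelian B by rewrite (isog_abelian isoBA).
have [t [defK ot tJ]] := GI_ext_abelian_sdprod abB gBK.
have [u [defK' ou uJ]] := GI_ext_abelian_sdprod abA gAK'.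
exact: isog_sdprod_inv defK ot tJ defK' ou uJ isoBA.
Qed.

Lemma gen_sqr_eq1 (gT : finGroupType) (G : {group gT}) :
  <<[set x in G | x ^+ 2 == 1]>> = <<[set x in G | #[x] == 2]>>.
Proof.
apply/eqP; rewrite eqEsubset !gen_subG; apply/andP; split; apply/subsetP=> x.
  rewrite inE => /andP[Gx x2]; have [-> | x1] := eqVneq x 1; first exact: group1.
  by rewrite mem_gen // inE Gx order_eq2 x2.
by rewrite !inE order_eq2 => /and3P[Gx x2 _]; rewrite mem_gen // inE Gx x2.
Qed.

Lemma setX_inj1 (gT cT : finGroupType) (G H : {set gT}) (C : {group cT}) :
  setX G C = setX H C -> G = H.
Proof.
move=> /setP eqGH; apply/setP=> x.
by have := eqGH (x, 1); rewrite !in_setX group1 !andbT.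
Qed.

Section DirectProductWithC2.
Variables (gT cT : finGroupType) (G : {group gT}) (c : cT).
Hypothesis oc : #[c] = 2.
Local Notation J := [set x in G | x ^+ 2 == 1].

Lemma involutions_setXD :
  [set x in setX G <[c]> :\: setX G 1 | #[x] == 2] = setX J [set c].
Proof.
apply/setP=> -[g k]; rewrite !inE -[k \in _]/(k \in <[c]>) (cycle2g oc) !inE /=.
have c1 : c != 1 by rewrite -order_eq1 oc.
have cc : c ^+ 2 = 1 by rewrite -oc expg_order.
have sqr_pair : (g, k) ^+ 2 = (g ^+ 2, k ^+ 2) by [].
rewrite order_eq2 sqr_pair /=; case: (g \in G) => //=.
have [-> | k1] := eqVneq k 1; first by rewrite /= [1 == c]eq_sym (negPf c1) andbF.
have [-> | kc] := eqVneq k c; last by rewrite andbF.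
by rewrite cc -pair_eqE /= !eqxx (negPf c1) andbF /= !andbT.
Qed.

Lemma gen_involutions_setXD :
  <<[set x in setX G <[c]> :\: setX G 1 | #[x] == 2]>> = setX <<J>> <[c]>.
Proof.
have J1 : 1 \in J by rewrite inE group1 expg1n eqxx.
rewrite involutions_setXD; apply/eqP; rewrite eqEsubset gen_subG.
rewrite setXS ?subset_gen ?sub1set ?cycle_id //= -[<[c]>]genGid -setX_gen //.
rewrite gen_subG; apply/subsetP=> -[g k] /setXP[Jg].
rewrite -[k \in _]/(k \in <[c]>) (cycle2g oc) !inE => /orP[/eqP-> | /eqP->].
  have g1E : (g, 1) = (g, c) * (1, c).
    by change ((g, 1) = (g * 1, c ^+ 2)); rewrite mulg1 -oc expg_order.
  by rewrite g1E groupM ?mem_gen ?in_setX ?set11 ?andbT.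
by rewrite mem_gen ?in_setX ?set11 ?andbT.
Qed.

End DirectProductWithC2.

Lemma GI_ext_setX1 (gT cT : finGroupType) (G : {group gT}) (C : {group cT}) :
  #|C| = 2 ->
  GI_ext (setX G 1) (setX G C) <-> G :=: <<[set x in G | #[x] == 2]>>.
Proof.
move=> oC; have /cyclicP[c defC] : cyclic C by rewrite prime_cyclic ?oC.
have oc : #[c] = 2 by rewrite orderE -defC oC.
have sG1C : setX G 1 \subset setX G C by rewrite setXS ?sub1G.
have iG1C : #|setX G C : setX G 1| = 2.
  by rewrite -divgS // !cardsX cards1 muln1 oC mulKn.
rewrite /GI_ext (index2_normal sG1C iG1C) iG1C /= defC (gen_involutions_setXD G oc).
rewrite gen_sqr_eq1.
by split=> [[_ _ /setX_inj1] | defG]; last rewrite -defG.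
Qed.

Lemma GI_ext_Sym_Alt (T : finType) : 1 < #|T| -> GI_ext 'Alt_T 'Sym_T.
Proof.
move=> T_gt1; split; [exact: Alt_normal | exact: Alt_index |].
have [x _] : exists x : T, x \in T by apply/card_gt0P; apply: ltnW.
apply/eqP; rewrite eqEsubset gen_subG; apply/andP; split; last first.
  by apply/subsetP=> p /setIdP[/setDP[]].
apply/subsetP=> p _; have : p \in <<[set tperm x y | y in T]>> by rewrite gen_tperm.
apply: subsetP; rewrite gen_subG; apply/subsetP=> _ /imsetP[y _ ->].
have [-> | xy] := eqVneq x y; first by rewrite tperm1 group1.
rewrite mem_gen // inE in_setD Alt_even odd_tperm xy inE /=.
rewrite order_eq2 expg2 tperm2 eqxx /=.
by apply: contra xy => /eqP/permP/(_ x); rewrite tpermL perm1 => ->.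
Qed.

Theorem mainTheorem2 :
  (forall (gT : finGroupType) (A : {group gT}), abelian A ->
     (exists (rT : finGroupType) (B K : {group rT}) (t : rT),
        [/\ B \isog A, GI_ext B K, B ><| <[t]> = K, #[t] = 2%N
          & {in B, forall b, b ^ t = b^-1}])
     /\ (forall K : {group gT}, GI_ext A K ->
          exists t : gT, [/\ A ><| <[t]> = K, #[t] = 2%N
                           & {in A, forall a, a ^ t = a^-1}])
     /\ (forall (rT : finGroupType) (B K : {group rT}) (K' : {group gT}),
           B \isog A -> GI_ext B K -> GI_ext A K' -> K \isog K'))
  /\
  (forall (gT cT : finGroupType) (G : {group gT}) (C : {group cT}),
     #|C| = 2%N ->
     (GI_ext (setX G 1) (setX G C) <->
      G :=: << [set x in G | #[x] == 2%N] >>))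
  /\
  (forall n : nat, (2 <= n)%N -> GI_ext ('Alt_('I_n))%G ('Sym_('I_n))%G).
Proof.
split; [|split].
- move=> gT A abA; split; first exact: GI_ext_abelian_exists.
  split=> [K | rT B K K' isoBA]; first exact: GI_ext_abelian_sdprod.
  exact: GI_ext_abelian_isog.
- exact: GI_ext_setX1.
- by move=> n n_ge2; apply: GI_ext_Sym_Alt; rewrite card_ord.
Qed.
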